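(* For every $s\in(0,1]$ there exist $\rho>0$ and a von Mangoldt plane $M_m$ such that $m'(r)=s$ for all $r\in[\rho,\infty)$.
   Context: For a smooth function $m\colon[0,\infty)\to[0,\infty)$ with $m(0)=0$, $m'(0)=1$, $m>0$ on $(0,\infty)$ and whose odd extension to $\mathbb R$ is smooth, $M_m$ is $\mathbb R^2$ with the complete smooth metric $dr^2+m(r)^2d\theta^2$ in polar coordinates, curvature $G_m=-m''/m$; $M_m$ is a von Mangoldt plane if $G_m$ is a non-increasing function of $r$. *)

From Stdlib Require Import Reals.
From Coquelicot Require Import Coquelicot.
Open Scope R_scope.

Definition smooth (f : R -> R) : Prop :=
  forall (n : nat) (x : R), ex_derive (Derive_n f n) x.

Definition odd_fun (f : R -> R) : Prop := forall x : R, f (- x) = - f x.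

Definition curvature (m : R -> R) (r : R) : R := - Derive_n m 2 r / m r.

(* m is given through its odd extension to R; its restriction to [0,oo)
   is the warping function of M_m. *)
Definition warping_function (m : R -> R) : Prop :=
  smooth m /\ odd_fun m /\ m 0 = 0 /\ Derive m 0 = 1 /\
  (forall r : R, 0 < r -> 0 < m r).

(* von Mangoldt plane: G_m non-increasing in r (on (0,oo); by continuity of
   the smooth function -m''/m this is the same as on [0,oo)). *)
Definition von_mangoldt (m : R -> R) : Prop :=
  warping_function m /\
  (forall x y : R, 0 < x -> x <= y -> curvature m y <= curvature m x).

From Stdlib Require Import Reals Lra ClassicalEpsilon.
From Coquelicot Require Import Coquelicot.
Open Scope R_scope.

(* Take [m] to be the inverse of [F y = int_0^y p], where [p] is a smooth even
   profile with [p 0 = 1] that increases with [|y|] to the value [1/s], reached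
   at [|y| = 1/sqrt 2]; it is built from the flat function [exp (-1/u)].  Then
   [m' = 1 / p(m)], so [m'(0) = 1] and [m' = s] as soon as [m r >= 1/sqrt 2], which
   holds for [r >= 1/s] since [m r >= s r].  Moreover [m'' = - p'(m) / p(m)^3],
   so the curvature is [2 (1/s - 1) e^2 u^-2 exp (-1/u) / p(m)^3] with
   [u = 1/2 - m^2]: as [r] grows, [u] decreases and [u^-2 exp (-1/u)] is
   increasing on [(0, 1/2]], while [p(m)] does not decrease. *)

Lemma is_derive_Rmult (f g : R -> R) (x a b : R) :
  is_derive f x a -> is_derive g x b ->
  is_derive (fun t => f t * g t) x (a * g x + f x * b).
Proof. intros Hf Hg; exact (is_derive_mult f g x a b Hf Hg Rmult_comm). Qed.

Lemma is_derive_Rcomp (f g : R -> R) (x a b : R) :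
  is_derive f (g x) a -> is_derive g x b -> is_derive (fun t => f (g t)) x (b * a).
Proof. exact (is_derive_comp f g x a b). Qed.

Lemma continuity_pt_of_is_derive (f : R -> R) (x l : R) :
  is_derive f x l -> continuity_pt f x.
Proof. intros H. apply derivable_continuous_pt. exists l. now apply is_derive_Reals. Qed.

Lemma is_derive_nonpos_le (f df : R -> R) (a b : R) : a <= b ->
  (forall x, a <= x <= b -> is_derive f x (df x)) ->
  (forall x, a <= x <= b -> df x <= 0) -> f b <= f a.
Proof.
  intros Hab Hd Hneg.
  destruct (MVT_gen f a b df) as [c [Hc Heq]];
    rewrite ?Rmin_left, ?Rmax_right in * by lra.
  - intros x Hx; apply Hd; lra.
  - intros x Hx; apply (continuity_pt_of_is_derive _ _ _ (Hd x Hx)).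
  - assert (df c * (b - a) <= 0) by (apply Rmult_le_0_r; [apply Hneg|]; lra).
    lra.
Qed.

(* Unlike [ex_derive (Derive_n f k)], this is
   preserved by the algebraic operations, by induction on [n]. *)
Fixpoint derivable_n (n : nat) (f : R -> R) : Prop :=
  match n with
  | O => True
  | S n => exists f', (forall x, is_derive f x (f' x)) /\ derivable_n n f'
  end.

Lemma derivable_n_ext n (f g : R -> R) :
  (forall x, f x = g x) -> derivable_n n f -> derivable_n n g.
Proof.
  destruct n as [|n]; simpl; auto.
  intros E [f' [Df Hf']]; exists f'; split; auto.
  intros x; apply is_derive_ext with f; auto.
Qed.

Lemma derivable_nS n f : derivable_n (S n) f -> derivable_n n f.
Proof.
  revert f; induction n as [|n IH]; intros f [f' [Df Hf']]; simpl; auto.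
  exists f'; split; auto.
Qed.

Lemma derivable_n_const n c : derivable_n n (fun _ => c).
Proof.
  revert c; induction n as [|n IH]; intros c; simpl; auto.
  exists (fun _ => 0); split; auto. intros x; exact (is_derive_const c x).
Qed.

Lemma derivable_n_id n : derivable_n n (fun t => t).
Proof.
  destruct n; simpl; auto.
  exists (fun _ => 1); split; [intros x; exact (is_derive_id x) | apply derivable_n_const].
Qed.

Lemma derivable_n_plus n f g :
  derivable_n n f -> derivable_n n g -> derivable_n n (fun t => f t + g t).
Proof.
  revert f g; induction n as [|n IH]; intros f g; simpl; auto.
  intros [f' [Df Hf']] [g' [Dg Hg']].
  exists (fun t => f' t + g' t); split; auto.
  intros x; exact (is_derive_plus f g x _ _ (Df x) (Dg x)).
Qed.

Lemma derivable_n_mult n f g :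
  derivable_n n f -> derivable_n n g -> derivable_n n (fun t => f t * g t).
Proof.
  revert f g; induction n as [|n IH]; intros f g Hf Hg; simpl; auto.
  pose proof (derivable_nS _ _ Hf) as Hf0; pose proof (derivable_nS _ _ Hg) as Hg0.
  destruct Hf as [f' [Df Hf']], Hg as [g' [Dg Hg']].
  exists (fun t => f' t * g t + f t * g' t); split.
  - intros; now apply is_derive_Rmult.
  - apply derivable_n_plus; apply IH; auto.
Qed.

Lemma derivable_n_comp n f g :
  derivable_n n f -> derivable_n n g -> derivable_n n (fun t => f (g t)).
Proof.
  revert f g; induction n as [|n IH]; intros f g Hf Hg; simpl; auto.
  pose proof (derivable_nS _ _ Hg) as Hg0.
  destruct Hf as [f' [Df Hf']], Hg as [g' [Dg Hg']].
  exists (fun t => g' t * f' (g t)); split.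
  - intros; now apply is_derive_Rcomp.
  - apply derivable_n_mult; auto.
Qed.

Lemma derivable_n_inv n f :
  (forall x, f x <> 0) -> derivable_n n f -> derivable_n n (fun t => / f t).
Proof.
  intros Hnz; revert f Hnz; induction n as [|n IH]; intros f Hnz Hf; simpl; auto.
  pose proof (derivable_nS _ _ Hf) as Hf0.
  destruct Hf as [f' [Df Hf']].
  exists (fun t => (-1 * f' t) * (/ f t * / f t)); split.
  - intros x. eapply is_derive_ext; [intros; reflexivity|].
    replace (-1 * f' x * (/ f x * / f x)) with (- f' x / f x ^ 2)
      by (field; apply Hnz).
    now apply is_derive_inv.
  - apply derivable_n_mult; [apply derivable_n_mult; auto; apply derivable_n_const|].
    apply derivable_n_mult; apply IH; auto.
Qed.

Lemma smooth_derivable_n f : (forall n, derivable_n n f) -> smooth f.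
Proof.
  intros H n; revert f H; induction n as [|n IH]; intros f H x.
  - destruct (H 1%nat) as [f' [Df _]]. exists (f' x); apply Df.
  - assert (Hf' : forall k, derivable_n k (Derive f)).
    { intros k. destruct (H (S k)) as [f' [Df Hf']].
      apply derivable_n_ext with f'; auto.
      intros t; symmetry; now apply is_derive_unique. }
    apply ex_derive_ext with (Derive_n (Derive f) n); [|now apply IH].
    intros t. change (Derive f) with (Derive_n f 1).
    now rewrite (Derive_n_comp f n 1 t), Nat.add_1_r.
Qed.
Definition flat (k : nat) (u : R) : R :=
  if Rlt_dec 0 u then (/ u) ^ k * exp (- / u) else 0.

Lemma flat_pos k u : 0 < u -> flat k u = (/ u) ^ k * exp (- / u).
Proof. intros H; unfold flat; destruct (Rlt_dec 0 u); [reflexivity|lra]. Qed.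

Lemma flat_npos k u : u <= 0 -> flat k u = 0.
Proof. intros H; unfold flat; destruct (Rlt_dec 0 u); [lra|reflexivity]. Qed.

Lemma flat_ge0 k u : 0 <= flat k u.
Proof.
  destruct (Rlt_dec 0 u) as [H|H]; [|rewrite flat_npos; lra].
  rewrite flat_pos by exact H.
  apply Rmult_le_pos; [apply pow_le, Rlt_le, Rinv_0_lt_compat, H|].
  apply Rlt_le, exp_pos.
Qed.

Lemma pow_div_fact_le_exp z N : 0 <= z -> z ^ N / INR (Factorial.fact N) <= exp z.
Proof.
  intros Hz. pose proof (exp_ge_taylor z N Hz) as H.
  destruct N as [|M]; [simpl in *; lra|].
  simpl sum_f_R0 in H.
  assert (0 <= sum_f_R0 (fun k => z ^ k / INR (Factorial.fact k)) M).
  { apply cond_pos_sum; intros n.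
    apply Rmult_le_pos; [now apply pow_le|].
    apply Rlt_le, Rinv_0_lt_compat, INR_fact_lt_0. }
  simpl; lra.
Qed.

Lemma flat_div_le k h : 0 < h ->
  flat k h / h <= INR (Factorial.fact (S (S k))) * h.
Proof.
  intros Hh. rewrite flat_pos by exact Hh.
  set (z := / h); set (C := INR (Factorial.fact (S (S k)))).
  assert (Hz : 0 < z) by now apply Rinv_0_lt_compat.
  assert (HC : 0 < C) by apply INR_fact_lt_0.
  pose proof (pow_div_fact_le_exp z (S (S k)) (Rlt_le _ _ Hz)) as Hexp.
  fold C in Hexp.
  replace (z ^ k * exp (- z) / h) with (z ^ S k / exp z)
    by (unfold z; rewrite exp_Ropp; simpl; field; split; [apply Rgt_not_eq, exp_pos|lra]).
  replace (C * h) with (C / z) by (unfold z; field; lra).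
  assert (Hez : 0 < exp z) by apply exp_pos.
  apply Rmult_le_reg_r with (exp z * z / C);
    [apply Rmult_lt_0_compat; [nra|now apply Rinv_0_lt_compat]|].
  replace (z ^ S k / exp z * (exp z * z / C)) with (z ^ S (S k) / C)
    by (simpl; field; lra).
  replace (C / z * (exp z * z / C)) with (exp z) by (field; lra).
  exact Hexp.
Qed.

Lemma is_derive_flat_0 k : is_derive (flat k) 0 0.
Proof.
  apply is_derive_Reals; intros eps Heps.
  set (C := INR (Factorial.fact (S (S k)))).
  assert (HC : 0 < C) by apply INR_fact_lt_0.
  assert (Hd : 0 < eps / C) by (apply Rdiv_lt_0_compat; auto).
  exists (mkposreal _ Hd); intros h Hh0 Hh; simpl in Hh.
  rewrite (flat_npos k 0), Rplus_0_l, Rminus_0_r, Rminus_0_r by lra.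
  destruct (Rlt_dec 0 h) as [Hp|Hn].
  - pose proof (flat_div_le k h Hp) as Hle; fold C in Hle.
    assert (0 <= flat k h / h)
      by (apply Rmult_le_pos; [apply flat_ge0|apply Rlt_le, Rinv_0_lt_compat, Hp]).
    rewrite Rabs_right in Hh by lra; rewrite Rabs_right by lra.
    apply Rle_lt_trans with (C * h); [exact Hle|].
    apply Rmult_lt_reg_l with (/ C); [now apply Rinv_0_lt_compat|].
    replace (/ C * (C * h)) with h by (field; lra).
    replace (/ C * eps) with (eps / C) by (unfold Rdiv; ring). exact Hh.
  - rewrite flat_npos by lra. unfold Rdiv; rewrite Rmult_0_l, Rabs_R0; exact Heps.
Qed.

Lemma is_derive_flat k x :
  is_derive (flat k) x (- INR k * flat (S k) x + flat (S (S k)) x).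
Proof.
  destruct (Rtotal_order x 0) as [Hn|[H0|Hp]].
  - rewrite !flat_npos by lra.
    apply is_derive_ext_loc with (fun _ => 0); [|eapply is_derive_ext;
      [intros; reflexivity|]; replace (- INR k * 0 + 0) with 0 by ring;
      exact (is_derive_const 0 x)].
    assert (Hx : 0 < - x) by lra.
    exists (mkposreal _ Hx); intros y Hy; change (Rabs (y - x) < - x) in Hy.
    apply Rabs_def2 in Hy. rewrite flat_npos by lra; reflexivity.
  - subst; rewrite !flat_npos by lra.
    replace (- INR k * 0 + 0) with 0 by ring. apply is_derive_flat_0.
  - rewrite !flat_pos by exact Hp.
    apply is_derive_ext_loc with (fun u => (/ u) ^ k * exp (- / u)).
    + exists (mkposreal x Hp); intros y Hy; change (Rabs (y - x) < x) in Hy.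
      apply Rabs_def2 in Hy. rewrite flat_pos by lra; reflexivity.
    + auto_derive; [lra|].
      destruct k as [|j]; cbn [pow Nat.pred]; [simpl; field; lra|].
      rewrite S_INR; field; lra.
Qed.

Lemma derivable_n_flat n : forall k, derivable_n n (flat k).
Proof.
  induction n as [|n IH]; intros k; simpl; auto.
  exists (fun x => - INR k * flat (S k) x + flat (S (S k)) x); split.
  - intros; apply is_derive_flat.
  - apply derivable_n_plus; auto. apply derivable_n_mult; auto. apply derivable_n_const.
Qed.

Lemma flat0_le u v : u <= v -> flat 0 u <= flat 0 v.
Proof.
  intros H. destruct (Rle_dec u 0) as [Hu|Hu]; [rewrite flat_npos; [apply flat_ge0|lra]|].
  rewrite !flat_pos by lra; simpl; rewrite !Rmult_1_l.
  destruct (Req_dec u v) as [->|Hne]; [lra|].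
  apply Rlt_le, exp_increasing, Ropp_lt_contravar, Rinv_lt_contravar; [nra|lra].
Qed.

(* [flat 2] is increasing only up to the maximum of [w^2 exp (-w)] at [w = 1/u = 2]. *)
Lemma flat2_le u v : u <= v <= 1/2 -> flat 2 u <= flat 2 v.
Proof.
  intros [Huv Hv]. destruct (Rle_dec u 0) as [Hu|Hu]; [rewrite flat_npos; [apply flat_ge0|lra]|].
  rewrite !flat_pos by lra.
  apply (is_derive_nonpos_le (fun w => w ^ 2 * exp (- w))
           (fun w => (2 * w - w ^ 2) * exp (- w))).
  - apply Rinv_le_contravar; lra.
  - intros w Hw; auto_derive; auto; ring.
  - intros w [Hw _]. apply Rmult_le_0_r; [|apply Rlt_le, exp_pos].
    assert (2 <= / v).
    { replace 2 with (/ (1/2)) by field. apply Rinv_le_contravar; lra. }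
    assert (/ v <= w) by (eapply Rle_trans; [|exact Hw]; apply Rinv_le_contravar; lra).
    nra.
Qed.

Section InverseAntiderivative.

Variables (q : R -> R) (c : R).
Hypothesis c_pos : 0 < c.
Hypothesis q_ge : forall x, c <= q x.
Hypothesis q_smooth : forall n, derivable_n n q.

Definition antideriv (x : R) : R := RInt q 0 x.

Definition inv_antideriv (r : R) : R :=
  epsilon (inhabits 0) (fun y => antideriv y = r).

Lemma q_continuous x : continuous q x.
Proof.
  destruct (q_smooth 1) as [q' [Dq _]].
  exact (ex_derive_continuous q x (ex_intro _ (q' x) (Dq x))).
Qed.

Lemma is_derive_antideriv x : is_derive antideriv x (q x).
Proof.
  apply is_derive_RInt with 0; [|apply q_continuous].
  apply filter_forall; intros y.
  exact (@RInt_correct R_CompleteNormedModule q 0 y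
           (@ex_RInt_continuous R_CompleteNormedModule q 0 y
              (fun z _ => q_continuous z))).
Qed.

Lemma antideriv0 : antideriv 0 = 0.
Proof. exact (@RInt_point R_CompleteNormedModule 0 q). Qed.

Lemma antideriv_growth x y : x <= y -> c * (y - x) <= antideriv y - antideriv x.
Proof.
  intros Hxy.
  destruct (MVT_gen antideriv x y q) as [z [_ ->]].
  - intros; apply is_derive_antideriv.
  - intros; eapply continuity_pt_of_is_derive, is_derive_antideriv.
  - apply Rmult_le_compat_r; [lra|apply q_ge].
Qed.

Lemma antideriv_le_inv x y : antideriv x <= antideriv y -> x <= y.
Proof.
  intros H. destruct (Rle_dec x y) as [|Hyx]; [assumption|].
  pose proof (antideriv_growth y x ltac:(lra)). nra.
Qed.

Lemma antideriv_surj r : exists y, antideriv y = r.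
Proof.
  set (a := Rabs r / c).
  assert (Ha : 0 <= a) by (apply Rmult_le_pos; [apply Rabs_pos|];
                            apply Rlt_le, Rinv_0_lt_compat, c_pos).
  assert (Hca : c * a = Rabs r) by (unfold a; field; lra).
  pose proof (antideriv_growth 0 a Ha); pose proof (antideriv_growth (- a) 0 ltac:(lra)).
  rewrite antideriv0 in *.
  pose proof (Rle_abs r); pose proof (Rle_abs (- r)); rewrite Rabs_Ropp in *.
  destruct (IVT_gen antideriv (- a) a r) as [y [_ Hy]]; [|rewrite Rmin_left, Rmax_right; lra|].
  - intros x; eapply continuity_pt_of_is_derive, is_derive_antideriv.
  - now exists y.
Qed.

Lemma antideriv_inv r : antideriv (inv_antideriv r) = r.
Proof. unfold inv_antideriv; apply epsilon_spec, antideriv_surj. Qed.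

Lemma inv_antideriv_K y : inv_antideriv (antideriv y) = y.
Proof.
  apply Rle_antisym; apply antideriv_le_inv; rewrite antideriv_inv; lra.
Qed.

Lemma inv_antideriv0 : inv_antideriv 0 = 0.
Proof. rewrite <- antideriv0 at 1; apply inv_antideriv_K. Qed.

Lemma inv_antideriv_le x y : x <= y -> inv_antideriv x <= inv_antideriv y.
Proof. intros H; apply antideriv_le_inv; now rewrite !antideriv_inv. Qed.

Lemma inv_antideriv_pos r : 0 < r -> 0 < inv_antideriv r.
Proof.
  intros Hr. pose proof (inv_antideriv_le 0 r (Rlt_le _ _ Hr)) as H.
  rewrite inv_antideriv0 in H. destruct H as [H|H]; [exact H|].
  pose proof (antideriv_inv r) as E; rewrite <- H, antideriv0 in E; lra.
Qed.

Lemma inv_antideriv_lipschitz x y : x <= y ->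
  c * (inv_antideriv y - inv_antideriv x) <= y - x.
Proof.
  intros H. pose proof (antideriv_growth _ _ (inv_antideriv_le x y H)) as G.
  now rewrite !antideriv_inv in G.
Qed.

Lemma inv_antideriv_continuous r : continuity_pt inv_antideriv r.
Proof.
  intros eps Heps. exists (c * eps); split; [nra|].
  intros x [_ Hx]; simpl in *; unfold R_dist in *.
  destruct (Rle_dec r x) as [H|H]; [|apply Rnot_le_lt, Rlt_le in H].
  - pose proof (inv_antideriv_lipschitz r x H); pose proof (inv_antideriv_le r x H).
    rewrite Rabs_right in * by lra. nra.
  - pose proof (inv_antideriv_lipschitz x r H); pose proof (inv_antideriv_le x r H).
    rewrite Rabs_left1 in * by lra. nra.
Qed.

Lemma is_derive_inv_antideriv r :
  is_derive inv_antideriv r (/ q (inv_antideriv r)).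
Proof.
  apply is_derive_Reals.
  pose (Dq a := exist (fun l => derivable_pt_lim antideriv a l) (q a)
                  (proj1 (is_derive_Reals _ _ _) (is_derive_antideriv a))).
  assert (Hincr : inv_antideriv (r - 1) <= inv_antideriv r <= inv_antideriv (r + 1))
    by (split; apply inv_antideriv_le; lra).
  pose proof (Ranalysis5.derivable_pt_lim_recip_interv antideriv inv_antideriv
    (r - 1) (r + 1) r (fun a _ => Dq a) (inv_antideriv_continuous r)
    ltac:(lra) ltac:(lra) Hincr (fun x _ => antideriv_inv x)) as H.
  simpl in H. rewrite <- (Rmult_1_l (/ _)).
  apply H. pose proof (q_ge (inv_antideriv r)). lra.
Qed.

Lemma derivable_n_comp_inv_antideriv n :
  forall f, derivable_n n f -> derivable_n n (fun r => f (inv_antideriv r)).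
Proof.
  induction n as [|n IH]; intros f Hf; simpl; auto.
  pose proof (derivable_nS _ _ Hf) as Hf0.
  destruct Hf as [f' [Df Hf']].
  exists (fun r => / q (inv_antideriv r) * f' (inv_antideriv r)); split.
  - intros x; apply is_derive_Rcomp; [apply Df|apply is_derive_inv_antideriv].
  - apply (IH (fun y => / q y * f' y)), derivable_n_mult; [|exact Hf'].
    apply derivable_n_inv; [intros y; pose proof (q_ge y); lra|apply q_smooth].
Qed.

Lemma smooth_inv_antideriv : smooth inv_antideriv.
Proof.
  apply smooth_derivable_n; intros n.
  apply (derivable_n_comp_inv_antideriv n (fun y => y)), derivable_n_id.
Qed.

Lemma inv_antideriv_odd : (forall x, q (- x) = q x) -> odd_fun inv_antideriv.
Proof.
  intros q_even r.
  assert (Hodd : forall y, antideriv (- y) = - antideriv y).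
  { intros y. set (h t := antideriv (- t) + antideriv t).
    assert (Dh : forall t, is_derive h t 0).
    { intros t. unfold h.
      replace 0 with (-1 * q (- t) + q t) by (rewrite q_even; ring).
      apply (is_derive_plus (fun t => antideriv (- t)) antideriv).
      - apply (is_derive_Rcomp antideriv Ropp); [apply is_derive_antideriv|].
        exact (is_derive_opp _ _ _ (is_derive_id t)).
      - apply is_derive_antideriv. }
    assert (Hh0 : h 0 = 0) by (unfold h; rewrite Ropp_0, antideriv0; ring).
    assert (h y = 0); [|unfold h in *; lra].
    destruct (Rtotal_order y 0) as [Hy|[->|Hy]]; [|exact Hh0|].
    - rewrite (eq_is_derive h y 0); [exact Hh0| |exact Hy]; intros; apply Dh.
    - rewrite <- (eq_is_derive h 0 y); [exact Hh0| |exact Hy]; intros; apply Dh. }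
  rewrite <- (antideriv_inv r) at 1. rewrite <- Hodd. apply inv_antideriv_K.
Qed.

Lemma inv_antideriv_ge C r : (forall x, q x <= C) -> 0 <= r -> r / C <= inv_antideriv r.
Proof.
  intros q_le Hr.
  pose proof (inv_antideriv_le 0 r Hr) as H; rewrite inv_antideriv0 in H.
  destruct (MVT_gen antideriv 0 (inv_antideriv r) q) as [z [_ Hz]].
  - intros; apply is_derive_antideriv.
  - intros; eapply continuity_pt_of_is_derive, is_derive_antideriv.
  - rewrite antideriv_inv, antideriv0, Rminus_0_r, Rminus_0_r in Hz.
    pose proof (q_le z); pose proof (q_ge z).
    apply Rmult_le_reg_r with C; [lra|]. unfold Rdiv. rewrite Rmult_assoc, Rinv_l by lra.
    rewrite Rmult_1_r; set (G := inv_antideriv r) in *; nra.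
Qed.

Lemma curvature_inv_antideriv (dq : R -> R) r :
  (forall y, is_derive q y (dq y)) -> 0 < r ->
  curvature inv_antideriv r
  = dq (inv_antideriv r) / (inv_antideriv r * q (inv_antideriv r) ^ 3).
Proof.
  intros Dq Hr. unfold curvature; simpl.
  assert (Hq : forall y, q y <> 0) by (intros y; pose proof (q_ge y); lra).
  rewrite (Derive_ext _ (fun t => / q (inv_antideriv t)))
    by (intros; apply is_derive_unique, is_derive_inv_antideriv).
  assert (Hd : is_derive (fun t : R => / q (inv_antideriv t)) r
                 (/ q (inv_antideriv r) * (- dq (inv_antideriv r) / q (inv_antideriv r) ^ 2))).
  { apply (is_derive_Rcomp (fun y => / q y)); [|apply is_derive_inv_antideriv].
    apply is_derive_inv; [apply Dq|apply Hq]. }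
  rewrite (is_derive_unique _ _ _ Hd).
  pose proof (inv_antideriv_pos r Hr); pose proof (Hq (inv_antideriv r)).
  field; lra.
Qed.

End InverseAntiderivative.

Definition profile (s y : R) : R := / s - (/ s - 1) * exp 2 * flat 0 (1/2 - y * y).

Lemma flat0_half : flat 0 (1/2) = exp (-2).
Proof. rewrite flat_pos by lra; simpl; rewrite Rmult_1_l; f_equal; field. Qed.

Lemma exp2_mul_exp_m2 : exp 2 * exp (-2) = 1.
Proof. rewrite <- exp_plus, Rplus_opp_r; apply exp_0. Qed.

Section Profile.

Variable s : R.
Hypothesis s_range : 0 < s <= 1.

Lemma profile_coef_ge0 : 0 <= (/ s - 1) * exp 2.
Proof.
  apply Rmult_le_pos; [|apply Rlt_le, exp_pos].
  enough (1 <= / s) by lra.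
  rewrite <- Rinv_1; apply Rinv_le_contravar; lra.
Qed.

Lemma profile_bounds y : 1 <= profile s y <= / s.
Proof.
  pose proof profile_coef_ge0; pose proof (flat_ge0 0 (1/2 - y * y)).
  assert (Hhalf : flat 0 (1/2 - y * y) <= exp (-2)).
  { rewrite <- flat0_half; apply flat0_le; nra. }
  unfold profile; split; [|nra].
  assert ((/ s - 1) * exp 2 * flat 0 (1/2 - y * y) <= / s - 1); [|lra].
  replace (/ s - 1) with ((/ s - 1) * exp 2 * exp (-2)) at 2 by (rewrite Rmult_assoc, exp2_mul_exp_m2; ring).
  now apply Rmult_le_compat_l.
Qed.

Lemma profile0 : profile s 0 = 1.
Proof.
  unfold profile. rewrite Rmult_0_l, Rminus_0_r, flat0_half, Rmult_assoc, exp2_mul_exp_m2.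
  ring.
Qed.

Lemma profile_far y : 1/2 <= y * y -> profile s y = / s.
Proof. intros H; unfold profile; rewrite flat_npos by lra; ring. Qed.

Lemma profile_even y : profile s (- y) = profile s y.
Proof. unfold profile; now rewrite Rmult_opp_opp. Qed.

Lemma profile_le x y : 0 <= x <= y -> profile s x <= profile s y.
Proof.
  intros Hxy; unfold profile.
  pose proof profile_coef_ge0.
  assert (flat 0 (1/2 - y * y) <= flat 0 (1/2 - x * x)) by (apply flat0_le; nra).
  enough ((/ s - 1) * exp 2 * flat 0 (1/2 - y * y)
          <= (/ s - 1) * exp 2 * flat 0 (1/2 - x * x)) by lra.
  now apply Rmult_le_compat_l.
Qed.

End Profile.

Definition dprofile (s y : R) : R := (/ s - 1) * exp 2 * (2 * y) * flat 2 (1/2 - y * y).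

Lemma is_derive_profile s y : is_derive (profile s) y (dprofile s y).
Proof.
  set (K := (/ s - 1) * exp 2).
  assert (Hin : is_derive (fun t => 1/2 - t * t) y (- (2 * y)))
    by (auto_derive; [easy|ring]).
  pose proof (is_derive_Rcomp (flat 0) _ y _ _ (is_derive_flat 0 _) Hin) as Hflat.
  pose proof (is_derive_minus (fun _ => / s) _ y 0 _ (is_derive_const _ y)
                (is_derive_scal _ y K _ Hflat)) as H.
  replace (dprofile s y) with
    (0 - K * (- (2 * y) * (- INR 0 * flat 1 (1/2 - y * y) + flat 2 (1/2 - y * y))))
    by (unfold dprofile, K; simpl; ring).
  exact H.
Qed.

Lemma derivable_n_profile s n : derivable_n n (profile s).
Proof.
  apply derivable_n_plus; [apply derivable_n_const|].
  apply derivable_n_ext with (fun y => -1 * ((/ s - 1) * exp 2 * flat 0 (1/2 - y * y)));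
    [intros; ring|].
  apply derivable_n_mult; [apply derivable_n_const|].
  apply derivable_n_mult; [apply derivable_n_const|].
  apply derivable_n_comp; [apply derivable_n_flat|].
  apply derivable_n_plus; [apply derivable_n_const|].
  apply derivable_n_ext with (fun y => -1 * (y * y)); [intros; ring|].
  apply derivable_n_mult; [apply derivable_n_const|].
  apply derivable_n_mult; apply derivable_n_id.
Qed.

Definition warp (s : R) : R -> R := inv_antideriv (profile s).

Section Warp.

Variable s : R.
Hypothesis s_range : 0 < s <= 1.

Let profile_ge y : 1 <= profile s y := proj1 (profile_bounds s s_range y).

Lemma warping_function_warp : warping_function (warp s).
Proof.
  split; [exact (smooth_inv_antideriv _ 1 Rlt_0_1 profile_ge (derivable_n_profile s))|].
  split; [exact (inv_antideriv_odd _ 1 Rlt_0_1 profile_ge (derivable_n_profile s) (profile_even s))|].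
  split; [exact (inv_antideriv0 _ 1 Rlt_0_1 profile_ge (derivable_n_profile s))|].
  split; [|exact (inv_antideriv_pos _ 1 Rlt_0_1 profile_ge (derivable_n_profile s))].
  unfold warp; rewrite (is_derive_unique _ _ _ (is_derive_inv_antideriv _ 1 Rlt_0_1 profile_ge
                                     (derivable_n_profile s) 0)).
  now rewrite (inv_antideriv0 _ 1 Rlt_0_1 profile_ge (derivable_n_profile s)), profile0, Rinv_1.
Qed.

Lemma curvature_warp_le x y : 0 < x -> x <= y -> curvature (warp s) y <= curvature (warp s) x.
Proof.
  intros Hx Hxy. unfold warp.
  rewrite !(curvature_inv_antideriv _ 1 Rlt_0_1 profile_ge (derivable_n_profile s)
              (dprofile s) _ (is_derive_profile s)) by lra.
  pose proof (inv_antideriv_pos _ 1 Rlt_0_1 profile_ge (derivable_n_profile s) x Hx) as Hu.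
  pose proof (inv_antideriv_le _ 1 Rlt_0_1 profile_ge (derivable_n_profile s) x y Hxy) as Huv.
  set (u := inv_antideriv (profile s) x) in *; set (v := inv_antideriv (profile s) y) in *.
  assert (Hcurv : forall w, 0 < w ->
            dprofile s w / (w * profile s w ^ 3)
            = (/ s - 1) * exp 2 * 2 * flat 2 (1/2 - w * w) * / profile s w ^ 3).
  { intros w Hw; pose proof (profile_ge w); unfold dprofile; field; split; lra. }
  rewrite !Hcurv by lra.
  pose proof (profile_coef_ge0 s s_range).
  pose proof (profile_ge u); pose proof (profile_le s s_range u v ltac:(lra)).
  apply Rmult_le_compat.
  - apply Rmult_le_pos; [lra|apply flat_ge0].
  - apply Rlt_le, Rinv_0_lt_compat, pow_lt; lra.
  - apply Rmult_le_compat_l; [lra|apply flat2_le; nra].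
  - apply Rinv_le_contravar; [apply pow_lt; lra|apply pow_incr; lra].
Qed.

Lemma Derive_warp_far r : / s <= r -> Derive (warp s) r = s.
Proof.
  intros Hr. unfold warp.
  rewrite (is_derive_unique _ _ _ (is_derive_inv_antideriv _ 1 Rlt_0_1 profile_ge
                                     (derivable_n_profile s) r)).
  assert (H1 : 1 <= s * r).
  { apply Rmult_le_compat_l with (r := s) in Hr; [|lra]. rewrite Rinv_r in Hr; lra. }
  assert (s * r <= inv_antideriv (profile s) r).
  { replace (s * r) with (r / / s) by (field; lra).
    apply inv_antideriv_ge with 1; [lra|exact profile_ge|apply derivable_n_profile| |nra].
    intros; apply profile_bounds, s_range. }
  rewrite profile_far by nra. field; lra.
Qed.

End Warp.

Theorem theorem1p11 :
  forall s : R, 0 < s <= 1 ->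
  exists (rho : R) (m : R -> R),
    0 < rho /\ von_mangoldt m /\
    (forall r : R, rho <= r -> Derive m r = s).
Proof.
  intros s Hs. exists (/ s), (warp s).
  split; [apply Rinv_0_lt_compat; lra|].
  split; [split|].
  - exact (warping_function_warp s Hs).
  - exact (curvature_warp_le s Hs).
  - exact (Derive_warp_far s Hs).
Qed.
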